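(* Let $K$ be a positive integer, $\tau\in\mathbb H$, and for $u,v\in\mathbb C$ write $z=e^{2\pi i u}$, $y=e^{2\pi i v}$, $q=e^{2\pi i\tau}$. Define the level $K$ Appell-Lerch sum $$A_K(u,v;\tau)=e^{\pi i K u}\sum_{n\in\mathbb Z}\frac{(-1)^{Kn}q^{Kn(n+1)/2}y^n}{1-zq^n},$$ and let $A_1$ denote the case $K=1$, i.e. $A_1(u,v;\tau)=e^{\pi i u}\sum_{n\in\mathbb Z}\frac{(-1)^{n}q^{n(n+1)/2}y^n}{1-zq^n}$. Then, whenever all terms are defined (i.e. no denominator vanishes), $$A_K(u,v;\tau)=\sum_{m=0}^{K-1}e^{2\pi i m u}\,A_1\Big(Ku,\;v+m\tau+\tfrac{K-1}{2};\;K\tau\Big)$$ and $$A_K(u,v;\tau)=K^{-1}e^{\pi i (K-1)u}\sum_{m=0}^{K-1}A_1\Big(u,\;\tfrac{v}{K}+\tfrac{m}{K}+\tau\tfrac{K-1}{2K};\;\tfrac{\tau}{K}\Big).$$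
   Context: The series defining $A_K$ converges for $\tau\in\mathbb H$ and all $v\in\mathbb C$, provided $u\notin\mathbb Z+\mathbb Z\tau$. *)

From Stdlib Require Import Reals ZArith.
From Coquelicot Require Import Coquelicot.
Open Scope C_scope.

Definition cexp (w : C) : C :=
  (exp (Re w) * cos (Im w), exp (Re w) * sin (Im w))%R.

Definition Ci : C := (0%R, 1%R).
Definition two_pi_i : C := RtoC (2 * PI)%R * Ci.

Definition signZ (m : Z) : C := if Z.even m then RtoC 1 else RtoC (-1).

(* Sum over n in Z of f n, as the sum of the two one-sided series
   (real and imaginary parts separately); equals the usual sum whenever the
   bilateral series converges absolutely, which is the case here. *)
Definition zsum (f : Z -> C) : C :=
  ((Series (fun n => Re (f (Z.of_nat n))) +
    Series (fun n => Re (f (- Z.of_nat n - 1)%Z)))%R,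
   (Series (fun n => Im (f (Z.of_nat n))) +
    Series (fun n => Im (f (- Z.of_nat n - 1)%Z)))%R).

Definition AL_term (K : nat) (u v tau : C) (n : Z) : C :=
  signZ (Z.of_nat K * n)%Z
  * cexp (two_pi_i * tau * RtoC (IZR (Z.of_nat K * n * (n + 1)) / 2)%R)
  * cexp (two_pi_i * v * RtoC (IZR n))
  / (RtoC 1 - cexp (two_pi_i * u) * cexp (two_pi_i * tau * RtoC (IZR n))).

Definition AL (K : nat) (u v tau : C) : C :=
  cexp (RtoC PI * Ci * RtoC (INR K) * u) * zsum (AL_term K u v tau).

Definition AL_defined (u tau : C) : Prop :=
  forall n : Z,
    RtoC 1 - cexp (two_pi_i * u) * cexp (two_pi_i * tau * RtoC (IZR n)) <> RtoC 0.

Definition csum_upto (K : nat) (f : nat -> C) : C :=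
  List.fold_right Cplus (RtoC 0) (List.map f (List.seq 0 K)).

From Pilot Require Import Defs.
From Stdlib Require Import Reals ZArith Lia Lra.
From Coquelicot Require Import Coquelicot.
Open Scope C_scope.

(* Both identities are proved term by term and then summed over n.  For the
   first, with w = z q^n the geometric sum 1/(1-w) = (1 + w + ... + w^(K-1))/(1-w^K)
   splits the n-th term of A_K into K pieces; the m-th piece is z^m times the
   n-th term of A_1(Ku, v + m tau + (K-1)/2; K tau), the shift by (K-1)/2
   supplying the sign (-1)^((K-1)n).  For the second, the m-th sum differs from
   the one with m = 0 by the factor rho_n^m, rho_n = e^(2 pi i n/K); summing over m
   kills every n not divisible by K and multiplies the others by K, and the
   surviving terms n = Kj are exactly those of A_K.  The Gaussian decay of
   q^(Kn(n+1)/2) makes every series absolutely convergent, which justifies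
   exchanging the finite sums with the bilateral ones. *)

Lemma C_ext (a b : C) : Re a = Re b -> Im a = Im b -> a = b.
Proof. destruct a, b; simpl; intros -> ->; reflexivity. Qed.

Ltac C_components := repeat match goal with w : C |- _ => destruct w end;
  unfold two_pi_i, Ci, Defs.Ci; try apply C_ext; simpl.

Ltac IZR_expand := repeat (rewrite plus_IZR || rewrite mult_IZR || rewrite minus_IZR
                           || rewrite opp_IZR); rewrite <- ?INR_IZR_INZ.

Lemma cexp_add a b : cexp (a + b) = cexp a * cexp b.
Proof.
  unfold cexp; C_components; rewrite exp_plus; [rewrite cos_plus | rewrite sin_plus]; ring.
Qed.

Lemma Cmod_cexp w : Cmod (cexp w) = exp (Re w).
Proof.
  unfold cexp, Cmod; simpl.
  match goal with |- sqrt ?s = _ => replace s with (exp (Re w) * exp (Re w))%R end.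
  - apply sqrt_square; left; apply exp_pos.
  - pose proof (sin2_cos2 (Im w)) as H; unfold Rsqr in H.
    transitivity (exp (Re w) * exp (Re w) * (sin (Im w) * sin (Im w) + cos (Im w) * cos (Im w)))%R;
      [rewrite H | ]; ring.
Qed.

Lemma cexp_real_arg x : cexp (RtoC x * Ci) = (cos x, sin x).
Proof.
  unfold cexp; C_components; replace (x * 0 - 0 * 1)%R with 0%R by ring;
    replace (x * 1 + 0 * 0)%R with x by ring; rewrite exp_0; ring.
Qed.

Lemma cexp_nat m w : cexp (RtoC (INR m) * w) = cexp w ^ m.
Proof.
  induction m as [|m IH]; simpl Cpow.
  - replace (RtoC (INR 0) * w) with (RtoC 0 * Ci) by (simpl; ring).
    rewrite cexp_real_arg, cos_0, sin_0; reflexivity.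
  - rewrite S_INR, <- IH, <- cexp_add, RtoC_plus; f_equal; ring.
Qed.

Lemma cexp_2pi_i_IZR k : cexp (two_pi_i * RtoC (IZR k)) = 1.
Proof.
  replace (two_pi_i * RtoC (IZR k)) with (RtoC (2 * (IZR k * PI)) * Ci) by (C_components; ring).
  rewrite cexp_real_arg, cos_2a_sin, sin_2a, sin_eq_0_1 by (exists k; reflexivity).
  C_components; ring.
Qed.

Lemma cexp_pi_i_IZR k : cexp (RtoC PI * Ci * RtoC (IZR k)) = signZ k.
Proof.
  unfold signZ; destruct (Z.even k) eqn:Ek.
  - apply Z.even_spec in Ek as [j ->].
    replace (RtoC PI * Ci * RtoC (IZR (2 * j))) with (two_pi_i * RtoC (IZR j))
      by (rewrite mult_IZR; C_components; ring).
    apply cexp_2pi_i_IZR.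
  - assert (Ok : Z.odd k = true) by (rewrite <- Z.negb_even, Ek; reflexivity).
    apply Z.odd_spec in Ok as [j ->].
    replace (RtoC PI * Ci * RtoC (IZR (2 * j + 1))) with (two_pi_i * RtoC (IZR j) + RtoC PI * Ci)
      by (rewrite plus_IZR, mult_IZR; C_components; ring).
    rewrite cexp_add, cexp_2pi_i_IZR, cexp_real_arg, cos_PI, sin_PI; C_components; ring.
Qed.

Lemma signZ_add a b : signZ (a + b) = signZ a * signZ b.
Proof.
  rewrite <- !cexp_pi_i_IZR, <- cexp_add, plus_IZR, RtoC_plus; f_equal; ring.
Qed.

Lemma cexp_2pi_i_eq_1 x : cexp (two_pi_i * RtoC x) = 1 -> exists k, x = IZR k.
Proof.
  replace (two_pi_i * RtoC x) with (RtoC (2 * PI * x) * Ci) by (C_components; ring).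
  rewrite cexp_real_arg; intros [= Hcos Hsin].
  destruct (sin_eq_0_0 _ Hsin) as [k Hk].
  assert (Hsign : signZ k = 1).
  { rewrite <- cexp_pi_i_IZR.
    replace (RtoC PI * Ci * RtoC (IZR k)) with (RtoC (2 * PI * x) * Ci)
      by (rewrite Hk; C_components; ring).
    rewrite cexp_real_arg, Hcos, Hsin; reflexivity. }
  unfold signZ in Hsign; destruct (Z.even k) eqn:Ek; [|injection Hsign; lra].
  apply Z.even_spec in Ek as [j ->]; exists j.
  rewrite mult_IZR in Hk; pose proof PI_RGT_0; nra.
Qed.

Lemma csum_upto_0 f : csum_upto 0 f = 0.
Proof. reflexivity. Qed.

Lemma csum_upto_S K f : csum_upto (S K) f = csum_upto K f + f K.
Proof.
  unfold csum_upto; rewrite List.seq_S, List.map_app, List.fold_right_app; simpl.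
  induction (List.map f (List.seq 0 K)) as [|x l IH]; simpl; [|rewrite IH]; ring.
Qed.

Lemma csum_upto_ext K f g :
  (forall m, (m < K)%nat -> f m = g m) -> csum_upto K f = csum_upto K g.
Proof.
  induction K as [|K IH]; intros Hfg; [reflexivity|].
  rewrite !csum_upto_S, IH, Hfg; auto.
Qed.

Lemma csum_upto_mult_l K c f : c * csum_upto K f = csum_upto K (fun m => c * f m).
Proof.
  induction K as [|K IH]; [rewrite !csum_upto_0; simpl; ring|].
  rewrite !csum_upto_S, <- IH; ring.
Qed.

Lemma csum_upto_const K c : csum_upto K (fun _ => c) = RtoC (INR K) * c.
Proof.
  induction K as [|K IH]; [rewrite !csum_upto_0; simpl; ring|].
  rewrite csum_upto_S, IH, S_INR, RtoC_plus; ring.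
Qed.

Lemma csum_upto_geom K w : (1 - w) * csum_upto K (Cpow w) = 1 - w ^ K.
Proof.
  induction K as [|K IH]; [rewrite !csum_upto_0; simpl; ring|].
  rewrite csum_upto_S, Cmult_plus_distr_l, IH; simpl; ring.
Qed.

Lemma csum_upto_root_of_unity K w : w ^ K = 1 -> w <> 1 -> csum_upto K (Cpow w) = 0.
Proof.
  intros HwK Hw1.
  assert (H1w : 1 - w <> 0) by (intro E; apply Hw1; rewrite <- (Cplus_0_l w), <- E; ring).
  transitivity (/ (1 - w) * ((1 - w) * csum_upto K (Cpow w))); [field; exact H1w|].
  rewrite csum_upto_geom, HwK; ring.
Qed.

Lemma im_le_Cmod c : (Rabs (Im c) <= Cmod c)%R.
Proof.
  destruct c as [a b]; unfold Cmod; simpl.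
  rewrite <- sqrt_Rsqr_abs; apply sqrt_le_1_alt; unfold Rsqr; nra.
Qed.

Definition ex_cseries (g : nat -> C) : Prop :=
  ex_series (fun n => Re (g n)) /\ ex_series (fun n => Im (g n)).

Definition cseries (g : nat -> C) : C :=
  (Series (fun n => Re (g n)), Series (fun n => Im (g n))).

Lemma ex_cseries_plus g h :
  ex_cseries g -> ex_cseries h -> ex_cseries (fun n => g n + h n).
Proof.
  intros [Hg1 Hg2] [Hh1 Hh2];
    split; [exact (ex_series_plus _ _ Hg1 Hh1) | exact (ex_series_plus _ _ Hg2 Hh2)].
Qed.

Lemma ex_cseries_scal c g : ex_cseries g -> ex_cseries (fun n => c * g n).
Proof.
  intros [Hg1 Hg2]; split;
    [ exact (ex_series_minus _ _ (ex_series_scal_l (Re c) _ Hg1) (ex_series_scal_l (Im c) _ Hg2))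
    | exact (ex_series_plus _ _ (ex_series_scal_l (Re c) _ Hg2) (ex_series_scal_l (Im c) _ Hg1)) ].
Qed.

Lemma cseries_plus g h : ex_cseries g -> ex_cseries h ->
  cseries (fun n => g n + h n) = cseries g + cseries h.
Proof.
  intros [Hg1 Hg2] [Hh1 Hh2];
    apply C_ext; [exact (Series_plus _ _ Hg1 Hh1) | exact (Series_plus _ _ Hg2 Hh2)].
Qed.

Lemma cseries_scal c g : ex_cseries g -> cseries (fun n => c * g n) = c * cseries g.
Proof.
  intros [Hg1 Hg2]; apply C_ext; simpl;
    [ rewrite Series_minus, !Series_scal_l | rewrite Series_plus, !Series_scal_l ];
    try reflexivity; apply (ex_series_scal_l (V := R_NormedModule)); assumption.
Qed.

Definition zsummable (f : Z -> C) : Prop :=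
  ex_cseries (fun n => f (Z.of_nat n)) /\ ex_cseries (fun n => f (- Z.of_nat n - 1)%Z).

Lemma zsum_cseries f :
  zsum f = cseries (fun n => f (Z.of_nat n)) + cseries (fun n => f (- Z.of_nat n - 1)%Z).
Proof. reflexivity. Qed.

Lemma zsum_ext f g : (forall n, f n = g n) -> zsum f = zsum g.
Proof.
  intros Hfg; unfold zsum; f_equal; f_equal; apply Series_ext; intro n; rewrite Hfg; reflexivity.
Qed.

Lemma zsummable_ext f g : (forall n, f n = g n) -> zsummable f -> zsummable g.
Proof.
  intros Hfg [[H1 H2] [H3 H4]]; repeat split;
    [revert H1 | revert H2 | revert H3 | revert H4];
    apply ex_series_ext; intro n; rewrite Hfg; reflexivity.
Qed.

Lemma zsummable_plus f g : zsummable f -> zsummable g -> zsummable (fun n => f n + g n).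
Proof. intros [] []; split; apply ex_cseries_plus; assumption. Qed.

Lemma zsummable_scal c f : zsummable f -> zsummable (fun n => c * f n).
Proof. intros []; split; apply ex_cseries_scal; assumption. Qed.

Lemma zsum_plus f g : zsummable f -> zsummable g ->
  zsum (fun n => f n + g n) = zsum f + zsum g.
Proof.
  intros [] []; rewrite !zsum_cseries,
    (cseries_plus (fun n => f (Z.of_nat n))), (cseries_plus (fun n => f (- Z.of_nat n - 1)%Z))
    by assumption; ring.
Qed.

Lemma zsum_scal c f : zsummable f -> zsum (fun n => c * f n) = c * zsum f.
Proof.
  intros []; rewrite !zsum_cseries,
    (cseries_scal c (fun n => f (Z.of_nat n))), (cseries_scal c (fun n => f (- Z.of_nat n - 1)%Z))
    by assumption; ring.
Qed.

Lemma zsummable_0 : zsummable (fun _ => 0).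
Proof.
  assert (H0 : ex_series (fun _ : nat => 0%R)).
  { apply (ex_series_ext (fun n => 0 ^ n * 0)%R); [intro; apply Rmult_0_r|].
    apply ex_series_scal_r, ex_series_geom; rewrite Rabs_R0; lra. }
  repeat split; assumption.
Qed.

Lemma zsum_0 : zsum (fun _ => 0) = 0.
Proof.
  rewrite (zsum_ext _ (fun n => 0 * 0)) by (intro; ring).
  rewrite zsum_scal by exact zsummable_0; ring.
Qed.

Lemma zsummable_csum_upto K (g : nat -> Z -> C) : (forall m, (m < K)%nat -> zsummable (g m)) ->
  zsummable (fun n => csum_upto K (fun m => g m n)).
Proof.
  induction K as [|K IH]; intros Hg.
  - exact zsummable_0.
  - apply (zsummable_ext (fun n => csum_upto K (fun m => g m n) + g K n));
      [intro; rewrite csum_upto_S; reflexivity | apply zsummable_plus; auto].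
Qed.

Lemma zsum_csum_upto K (g : nat -> Z -> C) : (forall m, (m < K)%nat -> zsummable (g m)) ->
  zsum (fun n => csum_upto K (fun m => g m n)) = csum_upto K (fun m => zsum (g m)).
Proof.
  induction K as [|K IH]; intros Hg.
  - exact zsum_0.
  - rewrite csum_upto_S, <- IH, <- zsum_plus by (try apply zsummable_csum_upto; auto).
    apply zsum_ext; intro; apply csum_upto_S.
Qed.

Lemma sum_n_zero_tail (a : nat -> R) m p :
  (m <= p)%nat -> (forall k, (m < k <= p)%nat -> a k = 0%R) -> sum_n a p = sum_n a m.
Proof.
  intros Hmp; induction Hmp as [|p Hmp IH]; intros Hzero; [reflexivity|].
  rewrite sum_Sn, Hzero, IH by (lia || (intros; apply Hzero; lia)); apply Rplus_0_r.
Qed.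

Lemma not_multiple_between K j i : ~ (K * j < K * i < K * j + K)%nat.
Proof.
  intros Hji; destruct (Nat.le_gt_cases i j) as [Hij | Hji'].
  - pose proof (Nat.mul_le_mono_l _ _ K Hij); lia.
  - pose proof (Nat.mul_le_mono_l _ _ K Hji'); rewrite Nat.mul_succ_r in *; lia.
Qed.

Section Multiples.

Variables (a : nat -> R) (K : nat).
Hypothesis K_pos : (0 < K)%nat.
Hypothesis a_off_multiples : forall n, (forall j, n <> K * j)%nat -> a n = 0%R.

Lemma sum_n_multiples j : sum_n a (K * j) = sum_n (fun i => a (K * i)%nat) j.
Proof.
  induction j as [|j IH]; [rewrite Nat.mul_0_r, !sum_O, Nat.mul_0_r; reflexivity|].
  rewrite sum_Sn, <- IH.
  replace (K * S j)%nat with (S (K * j + (K - 1))) by lia.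
  rewrite sum_Sn, (sum_n_zero_tail a (K * j)); [reflexivity | lia |].
  intros k Hk; apply a_off_multiples; intros i ->; apply (not_multiple_between K j i); lia.
Qed.

Lemma Series_multiples : ex_series a -> Series (fun i => a (K * i)%nat) = Series a.
Proof.
  intros [l Hl]; unfold Series.
  rewrite <- (Lim_seq_subseq (sum_n a) (fun i => K * i)%nat).
  - f_equal; apply Lim_seq_ext; intro j; symmetry; apply sum_n_multiples.
  - apply eventually_subseq; intro n; nia.
  - exists l; exact Hl.
Qed.

End Multiples.

Section IntegerMultiples.

Variables (H : Z -> R) (K : nat).
Hypothesis K_pos : (0 < K)%nat.
Hypothesis H_off_multiples : forall n, (forall j, n <> Z.of_nat K * j)%Z -> H n = 0%R.

Lemma Series_multiples_nonneg : ex_series (fun n => H (Z.of_nat n)) ->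
  Series (fun j => H (Z.of_nat K * Z.of_nat j)%Z) = Series (fun n => H (Z.of_nat n)).
Proof.
  intros Hser; rewrite <- (Series_multiples (fun n => H (Z.of_nat n)) K K_pos).
  - apply Series_ext; intro j; rewrite Nat2Z.inj_mul; reflexivity.
  - intros n Hn; apply H_off_multiples; intros j Hj.
    apply (Hn (Z.to_nat j)); nia.
  - exact Hser.
Qed.

(* -n-1 is a multiple of K only if n = K-1 mod K: drop the K-1 leading zeros first. *)
Lemma Series_multiples_neg : ex_series (fun n => H (- Z.of_nat n - 1)%Z) ->
  Series (fun j => H (Z.of_nat K * (- Z.of_nat j - 1))%Z) = Series (fun n => H (- Z.of_nat n - 1)%Z).
Proof.
  intros Hser.
  rewrite (Series_incr_n_aux (fun n => H (- Z.of_nat n - 1)%Z) (K - 1)).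
  - rewrite <- (Series_multiples (fun n => H (- Z.of_nat (K - 1 + n) - 1)%Z) K K_pos).
    + apply Series_ext; intro j; f_equal; lia.
    + intros n Hn; apply H_off_multiples; intros j Hj.
      apply (Hn (Z.to_nat (- j - 1))); nia.
    + apply (ex_series_incr_n (fun n => H (- Z.of_nat n - 1)%Z) (K - 1)), Hser.
  - intros k Hk; apply H_off_multiples; intros j Hj; destruct (Z.le_gt_cases 0 j); nia.
Qed.

End IntegerMultiples.

Lemma zsum_multiples (G : Z -> C) K : (0 < K)%nat -> zsummable G ->
  (forall n, (forall j, n <> Z.of_nat K * j)%Z -> G n = 0) ->
  zsum (fun j => G (Z.of_nat K * j)%Z) = zsum G.
Proof.
  intros HK [[Hpos_re Hpos_im] [Hneg_re Hneg_im]] Hoff.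
  assert (Hoff_re : forall n, (forall j, n <> Z.of_nat K * j)%Z -> Re (G n) = 0%R)
    by (intros n Hn; rewrite Hoff by exact Hn; reflexivity).
  assert (Hoff_im : forall n, (forall j, n <> Z.of_nat K * j)%Z -> Im (G n) = 0%R)
    by (intros n Hn; rewrite Hoff by exact Hn; reflexivity).
  unfold zsum; f_equal; f_equal;
    [ apply (Series_multiples_nonneg (fun n => Re (G n)))
    | apply (Series_multiples_neg (fun n => Re (G n)))
    | apply (Series_multiples_nonneg (fun n => Im (G n)))
    | apply (Series_multiples_neg (fun n => Im (G n))) ]; assumption.
Qed.

Lemma ex_series_eventually_le (a b : nat -> R) :
  eventually (fun n => Rabs (a n) <= b n)%R -> ex_series b -> ex_series a.
Proof.
  intros [N HN] Hb; apply (ex_series_incr_n a N).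
  apply (ex_series_le (V := R_CompleteNormedModule) _ (fun k => b (N + k)%nat)).
  - intro k; apply HN; lia.
  - apply (ex_series_incr_n b N), Hb.
Qed.

Lemma eventually_le_linear (x a : R) : (0 < a)%R -> eventually (fun n => x <= a * INR n)%R.
Proof.
  intros Ha; destruct (INR_unbounded (x / a)) as [N HN]; exists N; intros n Hn.
  apply le_INR in Hn.
  replace x with (a * (x / a))%R by (field; lra).
  apply Rmult_le_compat_l; lra.
Qed.

Lemma exp_le_compat x y : (x <= y)%R -> (exp x <= exp y)%R.
Proof. intros [Hxy | ->]; [left; apply exp_increasing, Hxy | right; reflexivity]. Qed.

Lemma two_lt_exp_1 : (2 < exp 1)%R.
Proof. pose proof (exp_ineq1 1 ltac:(lra)); lra. Qed.

Lemma exp_opp_1_lt_half : (exp (- (1)) < 1/2)%R.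
Proof.
  rewrite exp_Ropp; replace (1/2)%R with (/ 2)%R by field.
  apply Rinv_lt_contravar; pose proof two_lt_exp_1; nra.
Qed.

Lemma exp_opp_INR n : exp (- INR n) = (exp (-1) ^ n)%R.
Proof.
  induction n as [|n IH]; [simpl; rewrite Ropp_0, exp_0; reflexivity|].
  rewrite S_INR, <- tech_pow_Rmult, <- IH, <- exp_plus; f_equal; ring.
Qed.

Lemma ex_series_gaussian (alpha beta gamma : R) : (0 < alpha)%R ->
  ex_series (fun n => exp (- (alpha * INR n * INR n) + beta * INR n + gamma)).
Proof.
  intros Halpha.
  apply (ex_series_eventually_le _ (fun n => exp gamma * exp (-1) ^ n)%R).
  - apply (filter_imp (fun n => 1 + beta <= alpha * INR n)%R);
      [|apply eventually_le_linear; exact Halpha].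
    intros n Hn; rewrite Rabs_pos_eq by (left; apply exp_pos).
    rewrite <- exp_opp_INR, <- exp_plus; apply exp_le_compat.
    pose proof (pos_INR n); nra.
  - apply (ex_series_scal_l (exp gamma) (fun n => exp (-1) ^ n)%R), ex_series_geom.
    rewrite Rabs_pos_eq by (left; apply exp_pos).
    rewrite <- exp_0; apply exp_increasing; lra.
Qed.

Definition zq (u tau : C) (n : Z) : C :=
  cexp (two_pi_i * u) * cexp (two_pi_i * tau * RtoC (IZR n)).

(* log |(-1)^(Kn) q^(Kn(n+1)/2) y^n| at n = x *)
Definition AL_exponent (K : nat) (v tau : C) (x : R) : R :=
  (- (PI * Im tau * INR K) * x * (x + 1) - 2 * PI * Im v * x)%R.

Lemma Cmod_zq u tau n : Cmod (zq u tau n) = exp (- (2 * PI) * (Im u + Im tau * IZR n)).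
Proof.
  unfold zq; rewrite Cmod_mult, !Cmod_cexp, <- exp_plus; f_equal; C_components; ring.
Qed.

Lemma half_le_Cmod_1_minus (w : C) :
  (Cmod w <= 1/2 \/ 2 <= Cmod w)%R -> (1/2 <= Cmod (1 - w))%R.
Proof.
  pose proof (Cmod_triangle (1 - w) w) as H1; pose proof (Cmod_triangle (w - 1) 1) as H2.
  replace (1 - w + w) with (RtoC 1) in H1 by ring.
  replace (w - 1 + 1) with w in H2 by ring.
  replace (w - 1) with (- (1 - w)) in H2 by ring.
  rewrite Cmod_opp, Cmod_1 in *; lra.
Qed.

Lemma Cmod_AL_term_le K u v tau n : (1/2 <= Cmod (1 - zq u tau n))%R ->
  (Cmod (AL_term K u v tau n) <= 2 * exp (AL_exponent K v tau (IZR n)))%R.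
Proof.
  intros Hden; unfold AL_term; fold (zq u tau n).
  assert (Hden0 : 1 - zq u tau n <> 0) by (intro E; rewrite E, Cmod_0 in Hden; lra).
  rewrite Cmod_div, !Cmod_mult, !Cmod_cexp by exact Hden0.
  replace (Cmod (signZ (Z.of_nat K * n))) with 1%R
    by (unfold signZ; destruct Z.even; rewrite Cmod_R; [rewrite Rabs_R1 | rewrite Rabs_m1]; reflexivity).
  rewrite Rmult_1_l, <- exp_plus.
  match goal with |- (exp ?e / _ <= _)%R =>
    replace e with (AL_exponent K v tau (IZR n))
      by (unfold AL_exponent; IZR_expand; C_components; field)
  end.
  unfold Rdiv; rewrite Rmult_comm; apply Rmult_le_compat_r; [left; apply exp_pos|].
  replace 2%R with (/ (1/2))%R by field; apply Rinv_le_contravar; lra.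
Qed.

Lemma ex_cseries_AL_term K u v tau (idx : nat -> Z) (alpha beta gamma : R) :
  (0 < alpha)%R ->
  eventually (fun n => 1/2 <= Cmod (1 - zq u tau (idx n)))%R ->
  (forall n, AL_exponent K v tau (IZR (idx n))
             = - (alpha * INR n * INR n) + beta * INR n + gamma)%R ->
  ex_cseries (fun n => AL_term K u v tau (idx n)).
Proof.
  intros Halpha Hden Hexponent.
  assert (Hbound : eventually (fun n =>
    Cmod (AL_term K u v tau (idx n)) <= 2 * exp (- (alpha * INR n * INR n) + beta * INR n + gamma))%R).
  { revert Hden; apply filter_imp; intros n Hn; rewrite <- Hexponent; apply Cmod_AL_term_le, Hn. }
  pose proof (ex_series_scal_l 2%R _ (ex_series_gaussian alpha beta gamma Halpha)) as Hgauss.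
  split; (eapply ex_series_eventually_le; [|exact Hgauss]); revert Hbound;
    apply filter_imp; intros n Hn; (eapply Rle_trans; [|exact Hn]);
    [apply re_le_Cmod | apply im_le_Cmod].
Qed.

Lemma AL_term_zsummable K u v tau : (0 < K)%nat -> (0 < Im tau)%R -> zsummable (AL_term K u v tau).
Proof.
  intros HK Htau.
  assert (HK' : (0 < INR K)%R) by (apply lt_0_INR; exact HK).
  pose proof PI_RGT_0 as Hpi; pose proof two_lt_exp_1; pose proof exp_opp_1_lt_half.
  assert (Halpha : (0 < PI * Im tau * INR K)%R) by (apply Rmult_lt_0_compat; nra).
  assert (Hslope : (0 < 2 * PI * Im tau)%R) by nra.
  split.
  - apply (ex_cseries_AL_term _ _ _ _ _ _ (- (PI * Im tau * INR K) - 2 * PI * Im v) 0 Halpha).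
    + apply (filter_imp (fun n => 1 - 2 * PI * Im u <= 2 * PI * Im tau * INR n)%R);
        [|apply eventually_le_linear, Hslope].
      intros n Hn; apply half_le_Cmod_1_minus; left.
      rewrite Cmod_zq; IZR_expand.
      apply (Rle_trans _ (exp (- (1)))); [apply exp_le_compat; lra | lra].
    + intro n; unfold AL_exponent; IZR_expand; ring.
  - apply (ex_cseries_AL_term _ _ _ _ _ _ (- (PI * Im tau * INR K) + 2 * PI * Im v)
      (2 * PI * Im v) Halpha).
    + apply (filter_imp (fun n => 1 + 2 * PI * Im u - 2 * PI * Im tau <= 2 * PI * Im tau * INR n)%R);
        [|apply eventually_le_linear, Hslope].
      intros n Hn; apply half_le_Cmod_1_minus; right.
      rewrite Cmod_zq; IZR_expand.
      apply (Rle_trans _ (exp 1)); [lra | apply exp_le_compat; lra].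
    + intro n; unfold AL_exponent; IZR_expand; ring.
Qed.

Lemma zq_scale K u tau n :
  zq (RtoC (INR K) * u) (RtoC (INR K) * tau) n = zq u tau n ^ K.
Proof. unfold zq; rewrite <- !cexp_add, <- cexp_nat; f_equal; ring. Qed.

Lemma cexp_shifted_character K u v tau m n :
  cexp (two_pi_i * RtoC (INR m) * u) *
  cexp (two_pi_i * (v + RtoC (INR m) * tau + RtoC ((INR K - 1) / 2)%R) * RtoC (IZR n))
  = cexp (two_pi_i * v * RtoC (IZR n)) * signZ ((Z.of_nat K - 1) * n) * zq u tau n ^ m.
Proof.
  rewrite <- cexp_pi_i_IZR; unfold zq; rewrite <- (cexp_add (two_pi_i * u)), <- cexp_nat, <- !cexp_add.
  f_equal; IZR_expand; C_components; field.
Qed.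

Lemma AL_term_level1_summand K u v tau m n :
  1 - zq u tau n <> 0 -> 1 - zq u tau n ^ K <> 0 ->
  cexp (two_pi_i * RtoC (INR m) * u) *
  AL_term 1 (RtoC (INR K) * u) (v + RtoC (INR m) * tau + RtoC ((INR K - 1) / 2)%R)
    (RtoC (INR K) * tau) n
  = AL_term K u v tau n * ((1 - zq u tau n) / (1 - zq u tau n ^ K)) * zq u tau n ^ m.
Proof.
  intros Hw HwK; unfold AL_term; fold (zq u tau n).
  change (cexp (two_pi_i * (RtoC (INR K) * u)) *
          cexp (two_pi_i * (RtoC (INR K) * tau) * RtoC (IZR n)))
    with (zq (RtoC (INR K) * u) (RtoC (INR K) * tau) n).
  rewrite zq_scale.
  replace (two_pi_i * (RtoC (INR K) * tau) * RtoC (IZR (Z.of_nat 1 * n * (n + 1)) / 2)%R)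
    with (two_pi_i * tau * RtoC (IZR (Z.of_nat K * n * (n + 1)) / 2)%R)
    by (IZR_expand; C_components; field).
  replace (signZ (Z.of_nat K * n)) with (signZ (Z.of_nat 1 * n) * signZ ((Z.of_nat K - 1) * n))
    by (rewrite <- signZ_add; f_equal; lia).
  set (Q := cexp (two_pi_i * tau * RtoC (IZR (Z.of_nat K * n * (n + 1)) / 2)%R)).
  transitivity (cexp (two_pi_i * RtoC (INR m) * u) *
    cexp (two_pi_i * (v + RtoC (INR m) * tau + RtoC ((INR K - 1) / 2)%R) * RtoC (IZR n)) *
    signZ (Z.of_nat 1 * n) * Q / (1 - zq u tau n ^ K)); [unfold Cdiv; ring|].
  rewrite cexp_shifted_character; field; split; assumption.
Qed.

Lemma AL_term_level_split K u v tau n :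
  1 - zq u tau n <> 0 -> 1 - zq u tau n ^ K <> 0 ->
  AL_term K u v tau n =
  csum_upto K (fun m => cexp (two_pi_i * RtoC (INR m) * u) *
    AL_term 1 (RtoC (INR K) * u) (v + RtoC (INR m) * tau + RtoC ((INR K - 1) / 2)%R)
      (RtoC (INR K) * tau) n).
Proof.
  intros Hw HwK.
  rewrite (csum_upto_ext K _ (fun m =>
    AL_term K u v tau n * ((1 - zq u tau n) / (1 - zq u tau n ^ K)) * zq u tau n ^ m))
    by (intros; apply AL_term_level1_summand; assumption).
  rewrite <- csum_upto_mult_l.
  transitivity (AL_term K u v tau n * ((1 - zq u tau n) * csum_upto K (Cpow (zq u tau n)))
                / (1 - zq u tau n ^ K)).
  - rewrite csum_upto_geom; field; exact HwK.
  - unfold Cdiv; ring.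
Qed.

Definition root_of_unity (K : nat) (n : Z) : C := cexp (two_pi_i * RtoC (IZR n / INR K)%R).

Section RootsOfUnity.

Variable K : nat.
Hypothesis K_pos : (0 < K)%nat.

Let INR_K_neq_0 : INR K <> 0%R.
Proof. apply not_0_INR; lia. Qed.

Lemma root_of_unity_pow n : root_of_unity K n ^ K = 1.
Proof.
  unfold root_of_unity; rewrite <- cexp_nat, <- (cexp_2pi_i_IZR n); f_equal.
  C_components; field; exact INR_K_neq_0.
Qed.

Lemma root_of_unity_multiple j : root_of_unity K (Z.of_nat K * j) = 1.
Proof.
  unfold root_of_unity; rewrite <- (cexp_2pi_i_IZR j), mult_IZR, <- INR_IZR_INZ; do 3 f_equal.
  field; exact INR_K_neq_0.
Qed.

Lemma root_of_unity_neq_1 n : (forall j, n <> Z.of_nat K * j)%Z -> root_of_unity K n <> 1.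
Proof.
  intros Hn E; destruct (cexp_2pi_i_eq_1 _ E) as [j Hj]; apply (Hn j), eq_IZR.
  rewrite mult_IZR, <- INR_IZR_INZ, <- Hj; field; exact INR_K_neq_0.
Qed.

Lemma csum_upto_root_of_unity_powers n : (forall j, n <> Z.of_nat K * j)%Z ->
  csum_upto K (Cpow (root_of_unity K n)) = 0.
Proof.
  intros Hn; apply csum_upto_root_of_unity;
    [apply root_of_unity_pow | apply root_of_unity_neq_1, Hn].
Qed.

Lemma AL_term_twist u v tau m n :
  AL_term 1 u (v / RtoC (INR K) + RtoC (INR m / INR K)%R
                 + tau * RtoC ((INR K - 1) / (2 * INR K))%R) (tau / RtoC (INR K)) n
  = AL_term 1 u (v / RtoC (INR K) + tau * RtoC ((INR K - 1) / (2 * INR K))%R)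
      (tau / RtoC (INR K)) n * root_of_unity K n ^ m.
Proof.
  unfold AL_term, root_of_unity; rewrite <- cexp_nat.
  match goal with |- _ * cexp ?e / _ = _ =>
    replace e with (two_pi_i * (v / RtoC (INR K) + tau * RtoC ((INR K - 1) / (2 * INR K))%R)
                    * RtoC (IZR n) + RtoC (INR m) * (two_pi_i * RtoC (IZR n / INR K)%R))
  end.
  - rewrite cexp_add; unfold Cdiv; ring.
  - unfold Cdiv, Cinv; C_components; field; exact INR_K_neq_0.
Qed.

Lemma AL_term_dilate u v tau j :
  AL_term 1 u (v / RtoC (INR K) + tau * RtoC ((INR K - 1) / (2 * INR K))%R)
    (tau / RtoC (INR K)) (Z.of_nat K * j)
  = AL_term K u v tau j.
Proof.
  unfold AL_term.
  replace (Z.of_nat 1 * (Z.of_nat K * j))%Z with (Z.of_nat K * j)%Z by lia.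
  rewrite <- !Cmult_assoc, <- !cexp_add.
  f_equal; [f_equal | do 3 f_equal]; f_equal;
    IZR_expand; unfold Cdiv, Cinv; C_components; field; exact INR_K_neq_0.
Qed.

End RootsOfUnity.

Lemma zsum_AL_term_level_split K u v tau : (0 < K)%nat -> (0 < Im tau)%R ->
  AL_defined u tau -> AL_defined (RtoC (INR K) * u) (RtoC (INR K) * tau) ->
  zsum (AL_term K u v tau) =
  csum_upto K (fun m => cexp (two_pi_i * RtoC (INR m) * u) *
    zsum (AL_term 1 (RtoC (INR K) * u) (v + RtoC (INR m) * tau + RtoC ((INR K - 1) / 2)%R)
      (RtoC (INR K) * tau))).
Proof.
  intros HK Htau Hdef HdefK.
  assert (HtauK : (0 < Im (RtoC (INR K) * tau))%R).
  { replace (Im _) with (INR K * Im tau)%R by (C_components; ring).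
    apply Rmult_lt_0_compat; [apply lt_0_INR, HK | exact Htau]. }
  set (T := fun m => AL_term 1 (RtoC (INR K) * u)
              (v + RtoC (INR m) * tau + RtoC ((INR K - 1) / 2)%R) (RtoC (INR K) * tau)).
  assert (HT : forall m, zsummable (T m)) by (intro; apply AL_term_zsummable; [lia | exact HtauK]).
  rewrite (csum_upto_ext _ _ (fun m => zsum (fun n => cexp (two_pi_i * RtoC (INR m) * u) * T m n)))
    by (intros; rewrite zsum_scal by apply HT; reflexivity).
  rewrite <- zsum_csum_upto by (intros; apply zsummable_scal, HT).
  apply zsum_ext; intro n; apply AL_term_level_split;
    [apply Hdef | rewrite <- zq_scale; apply HdefK].
Qed.

Lemma zsum_AL_term_average K u v tau : (0 < K)%nat -> (0 < Im tau)%R ->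
  csum_upto K (fun m => zsum (AL_term 1 u
    (v / RtoC (INR K) + RtoC (INR m / INR K)%R + tau * RtoC ((INR K - 1) / (2 * INR K))%R)
    (tau / RtoC (INR K))))
  = RtoC (INR K) * zsum (AL_term K u v tau).
Proof.
  intros HK Htau.
  assert (HtauK : (0 < Im (tau / RtoC (INR K)))%R).
  { replace (Im _) with (Im tau / INR K)%R
      by (unfold Cdiv, Cinv; C_components; field; apply not_0_INR; lia).
    apply Rdiv_lt_0_compat; [exact Htau | apply lt_0_INR, HK]. }
  set (S := fun m => AL_term 1 u
              (v / RtoC (INR K) + RtoC (INR m / INR K)%R + tau * RtoC ((INR K - 1) / (2 * INR K))%R)
              (tau / RtoC (INR K))).
  set (B := AL_term 1 u (v / RtoC (INR K) + tau * RtoC ((INR K - 1) / (2 * INR K))%R)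
              (tau / RtoC (INR K))).
  assert (HS : forall m, zsummable (S m)) by (intro; apply AL_term_zsummable; [lia | exact HtauK]).
  assert (HSB : forall n, csum_upto K (fun m => S m n)
                          = B n * csum_upto K (Cpow (root_of_unity K n)))
    by (intro n; rewrite csum_upto_mult_l; apply csum_upto_ext; intros; apply AL_term_twist, HK).
  rewrite <- zsum_csum_upto by (intros; apply HS).
  rewrite (zsum_ext _ (fun n => B n * csum_upto K (Cpow (root_of_unity K n)))) by apply HSB.
  rewrite <- (zsum_multiples _ K HK).
  - rewrite (zsum_ext _ (fun j => RtoC (INR K) * AL_term K u v tau j)).
    + apply zsum_scal, AL_term_zsummable; [exact HK | exact Htau].
    + intro j; rewrite root_of_unity_multiple by exact HK.
      rewrite (csum_upto_ext K _ (fun _ => 1)) by (intros; apply Cpow_1_l).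
      rewrite csum_upto_const; unfold B; rewrite AL_term_dilate by exact HK; ring.
  - apply (zsummable_ext (fun n => csum_upto K (fun m => S m n))); [exact HSB|].
    apply zsummable_csum_upto; intros; apply HS.
  - intros n Hn; rewrite csum_upto_root_of_unity_powers by assumption; ring.
Qed.

Theorem mainTheorem1 (K : nat) (HK : (0 < K)%nat) (tau u v : C)
  (Htau : (0 < Im tau)%R) :
  (AL_defined u tau ->
   AL_defined (RtoC (INR K) * u) (RtoC (INR K) * tau) ->
   AL K u v tau =
   csum_upto K (fun m =>
     cexp (two_pi_i * RtoC (INR m) * u) *
     AL 1 (RtoC (INR K) * u)
          (v + RtoC (INR m) * tau + RtoC ((INR K - 1) / 2)%R)
          (RtoC (INR K) * tau)))
  /\
  (AL_defined u tau ->
   AL_defined u (tau / RtoC (INR K)) ->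
   AL K u v tau =
   / RtoC (INR K) * cexp (RtoC PI * Ci * RtoC (INR K - 1)%R * u) *
   csum_upto K (fun m =>
     AL 1 u
          (v / RtoC (INR K) + RtoC (INR m / INR K)%R
             + tau * RtoC ((INR K - 1) / (2 * INR K))%R)
          (tau / RtoC (INR K)))).
Proof.
  assert (HKC : RtoC (INR K) <> 0) by (intros [= HK0]; revert HK0; apply not_0_INR; lia).
  unfold AL; split.
  - intros Hdef HdefK.
    rewrite zsum_AL_term_level_split, csum_upto_mult_l by assumption.
    apply csum_upto_ext; intros m _.
    replace (RtoC PI * Defs.Ci * RtoC (INR 1) * (RtoC (INR K) * u))
      with (RtoC PI * Defs.Ci * RtoC (INR K) * u) by (simpl; ring).
    ring.
  - (* this identity holds termwise whatever the denominators, junk values included *)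
    intros _ _.
    rewrite <- (csum_upto_mult_l K (cexp (RtoC PI * Defs.Ci * RtoC (INR 1) * u))),
      zsum_AL_term_average by assumption.
    replace (cexp (RtoC PI * Defs.Ci * RtoC (INR K) * u))
      with (cexp (RtoC PI * Ci * RtoC (INR K - 1)%R * u) * cexp (RtoC PI * Defs.Ci * RtoC (INR 1) * u))
      by (rewrite <- cexp_add; f_equal; change Ci with Defs.Ci; rewrite RtoC_minus; simpl; ring).
    field; exact HKC.
Qed.
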